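(* Let $\mathsf{MRK}$ be the axiom scheme $\neg\forall\alpha\mathsf{P}\to\exists\alpha\mathsf{P}^\bot$ for atomic $\mathsf{P}$. (1) Every instance of $\mathsf{MRK}$ is provable in $\mathsf{HA}+\mathsf{EM}_1^-$. (2) Conversely, the rule $\mathsf{EM}_1^-$ is derivable in $\mathsf{HA}+\mathsf{MRK}$: for atomic $\mathsf{P}$ and $C$, if $\Gamma,\forall\alpha\mathsf{P}\vdash\exists\beta C$ and $\Gamma,\exists\alpha\mathsf{P}^\bot\vdash\exists\beta C$ in $\mathsf{HA}+\mathsf{MRK}$, then $\Gamma\vdash\exists\beta C$ in $\mathsf{HA}+\mathsf{MRK}$.
   Context: $\mathsf{HA}$ is intuitionistic first-order arithmetic (Heyting arithmetic, in natural deduction) over $0,\mathsf{S},+,\cdot,=$ with the Peano axioms and induction scheme; atomic formulas are decidable and $\mathsf{P}^\bot$ denotes the complementary atomic predicate of $\mathsf{P}$ (so $\mathsf{P}^\bot\equiv\neg\mathsf{P}$). $\mathsf{HA}+\mathsf{EM}_1^-$ is $\mathsf{HA}$ extended with the rule $\mathsf{EM}_1^-$: from $\Gamma,\forall\alpha\mathsf{P}\vdash\exists\beta C$ and $\Gamma,\exists\alpha\mathsf{P}^\bot\vdash\exists\beta C$, with $\mathsf{P},C$ atomic, infer $\Gamma\vdash\exists\beta C$ (discharging the two hypotheses). $\mathsf{HA}+\mathsf{MRK}$ is $\mathsf{HA}$ with the instances of $\mathsf{MRK}$ as additional axioms. *)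

From Stdlib Require Import List.
Import ListNotations.

Inductive term : Type :=
| tvar  : nat -> term
| tzero : term
| tsucc : term -> term
| tplus : term -> term -> term
| tmult : term -> term -> term.

Inductive atom : Type :=
| AEq  : term -> term -> atom
| ANeq : term -> term -> atom.

Definition perp (P : atom) : atom :=
  match P with
  | AEq t s => ANeq t s
  | ANeq t s => AEq t s
  end.

Inductive formula : Type :=
| Atom : atom -> formula
| Bot  : formula
| And  : formula -> formula -> formula
| Or   : formula -> formula -> formula
| Imp  : formula -> formula -> formula
| Fa   : formula -> formula
| Ex   : formula -> formula.

Definition Neg (A : formula) : formula := Imp A Bot.

Fixpoint tsubst (sg : nat -> term) (t : term) : term :=
  match t with
  | tvar n => sg n
  | tzero => tzero
  | tsucc u => tsucc (tsubst sg u)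
  | tplus u v => tplus (tsubst sg u) (tsubst sg v)
  | tmult u v => tmult (tsubst sg u) (tsubst sg v)
  end.

Definition shift (n : nat) : term := tvar (S n).

Definition up (sg : nat -> term) (n : nat) : term :=
  match n with
  | 0 => tvar 0
  | S k => tsubst shift (sg k)
  end.

Definition asubst (sg : nat -> term) (a : atom) : atom :=
  match a with
  | AEq t s => AEq (tsubst sg t) (tsubst sg s)
  | ANeq t s => ANeq (tsubst sg t) (tsubst sg s)
  end.

Fixpoint fsubst (sg : nat -> term) (A : formula) : formula :=
  match A with
  | Atom a => Atom (asubst sg a)
  | Bot => Bot
  | And A B => And (fsubst sg A) (fsubst sg B)
  | Or A B => Or (fsubst sg A) (fsubst sg B)
  | Imp A B => Imp (fsubst sg A) (fsubst sg B)
  | Fa A => Fa (fsubst (up sg) A)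
  | Ex A => Ex (fsubst (up sg) A)
  end.

Definition flift (A : formula) : formula := fsubst shift A.

Definition inst_sub (t : term) (n : nat) : term :=
  match n with 0 => t | S k => tvar k end.
Definition inst (t : term) (A : formula) : formula := fsubst (inst_sub t) A.

Definition succ_sub (n : nat) : term :=
  match n with 0 => tsucc (tvar 0) | S k => tvar (S k) end.

Inductive system : Type := HA_EM1 | HA_MRK.

(* prf sys Gamma A : Gamma |- A in HA + EM1^- (sys = HA_EM1)
   or in HA + MRK (sys = HA_MRK), natural deduction. *)
Inductive prf (sys : system) : list formula -> formula -> Prop :=
| p_hyp : forall G A, In A G -> prf sys G A
| p_impI : forall G A B, prf sys (A :: G) B -> prf sys G (Imp A B)
| p_impE : forall G A B, prf sys G (Imp A B) -> prf sys G A -> prf sys G B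
| p_andI : forall G A B, prf sys G A -> prf sys G B -> prf sys G (And A B)
| p_andE1 : forall G A B, prf sys G (And A B) -> prf sys G A
| p_andE2 : forall G A B, prf sys G (And A B) -> prf sys G B
| p_orI1 : forall G A B, prf sys G A -> prf sys G (Or A B)
| p_orI2 : forall G A B, prf sys G B -> prf sys G (Or A B)
| p_orE : forall G A B C, prf sys G (Or A B) -> prf sys (A :: G) C ->
    prf sys (B :: G) C -> prf sys G C
| p_botE : forall G A, prf sys G Bot -> prf sys G A
| p_faI : forall G A, prf sys (map flift G) A -> prf sys G (Fa A)
| p_faE : forall G A t, prf sys G (Fa A) -> prf sys G (inst t A)
| p_exI : forall G A t, prf sys G (inst t A) -> prf sys G (Ex A)
| p_exE : forall G A B, prf sys G (Ex A) ->
    prf sys (A :: map flift G) (flift B) -> prf sys G B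
| p_refl : forall G t, prf sys G (Atom (AEq t t))
| p_leib : forall G t s A,
    prf sys G (Imp (Atom (AEq t s)) (Imp (inst t A) (inst s A)))
| p_neq1 : forall G t s,
    prf sys G (Imp (Atom (ANeq t s)) (Neg (Atom (AEq t s))))
| p_neq2 : forall G t s,
    prf sys G (Imp (Neg (Atom (AEq t s))) (Atom (ANeq t s)))
| p_succ0 : forall G t, prf sys G (Neg (Atom (AEq (tsucc t) tzero)))
| p_succinj : forall G t s,
    prf sys G (Imp (Atom (AEq (tsucc t) (tsucc s))) (Atom (AEq t s)))
| p_plus0 : forall G t, prf sys G (Atom (AEq (tplus t tzero) t))
| p_plusS : forall G t s,
    prf sys G (Atom (AEq (tplus t (tsucc s)) (tsucc (tplus t s))))
| p_mult0 : forall G t, prf sys G (Atom (AEq (tmult t tzero) tzero))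
| p_multS : forall G t s,
    prf sys G (Atom (AEq (tmult t (tsucc s)) (tplus (tmult t s) t)))
| p_ind : forall G A, prf sys G (inst tzero A) ->
    prf sys G (Fa (Imp A (fsubst succ_sub A))) -> prf sys G (Fa A)
| p_em1 : forall G (P C : atom), sys = HA_EM1 ->
    prf sys (Fa (Atom P) :: G) (Ex (Atom C)) ->
    prf sys (Ex (Atom (perp P)) :: G) (Ex (Atom C)) ->
    prf sys G (Ex (Atom C))
| p_mrk : forall G (P : atom), sys = HA_MRK ->
    prf sys G (Imp (Neg (Fa (Atom P))) (Ex (Atom (perp P)))).

(* MRK follows from EM1^- applied to the hypothesis ~ forall P itself: under
   forall P it is contradictory, under exists P^bot it is the goal.
   Conversely, MRK for C^bot makes exists C stable under double negation,
   since forall C^bot refutes exists C.  So it suffices to refute ~ exists C: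
   that hypothesis, with the first premise, refutes forall P; MRK then gives
   exists P^bot, and the second premise turns it into exists C. *)
From Stdlib Require Import List.
Import ListNotations.

Arguments p_impI {sys G A B}.
Arguments p_impE {sys G A B}.
Arguments p_faE {sys G A} t.
Arguments p_exE {sys G A B}.
Arguments p_em1 {sys G P C}.
Arguments p_mrk {sys G} P.

Lemma incl_cons_cons {X : Type} (a : X) (l l' : list X) :
  incl l l' -> incl (a :: l) (a :: l').
Proof. intros H; apply incl_cons; [apply in_eq | apply incl_tl, H]. Qed.

Lemma prf_weaken {sys G A} : prf sys G A -> forall G', incl G G' -> prf sys G' A.
Proof.
  induction 1; intros G' HG;
    solve [econstructor; eauto using incl_cons_cons, incl_map].
Qed.

Lemma prf_weaken_cons sys G D A B :
  prf sys (A :: G) B -> prf sys (A :: D :: G) B.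
Proof.
  intros H; apply (prf_weaken H), incl_cons_cons, incl_tl, incl_refl.
Qed.

Lemma prf_weaken_tl sys G D B : prf sys G B -> prf sys (D :: G) B.
Proof. intros H; apply (prf_weaken H), incl_tl, incl_refl. Qed.

Lemma prf_cut sys G A B : prf sys G A -> prf sys (A :: G) B -> prf sys G B.
Proof. intros HA HB; exact (p_impE (p_impI HB) HA). Qed.

Lemma perpK a : perp (perp a) = a.
Proof. now destruct a. Qed.

Lemma tsubst_inst0_up_shift t : tsubst (inst_sub (tvar 0)) (tsubst (up shift) t) = t.
Proof. induction t as [[|n]| | | |]; simpl; congruence. Qed.

Lemma asubst_inst0_up_shift a : asubst (inst_sub (tvar 0)) (asubst (up shift) a) = a.
Proof. destruct a; simpl; now rewrite !tsubst_inst0_up_shift. Qed.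

(* The shape in which a universal hypothesis is available under [p_exE],
   which lifts the context. *)
Lemma prf_faE_var0 sys G a : prf sys G (flift (Fa (Atom a))) -> prf sys G (Atom a).
Proof.
  intros H. pose proof (p_faE (tvar 0) H) as H0.
  unfold inst in H0; simpl in H0; now rewrite asubst_inst0_up_shift in H0.
Qed.

Lemma prf_atom_perp_absurd sys G a :
  prf sys G (Atom a) -> prf sys G (Atom (perp a)) -> prf sys G Bot.
Proof.
  destruct a as [t s | t s]; simpl; intros Ha Hpa.
  - exact (p_impE (p_impE (p_neq1 _ _ t s) Hpa) Ha).
  - exact (p_impE (p_impE (p_neq1 _ _ t s) Ha) Hpa).
Qed.

Lemma prf_fa_perp_not_ex sys G C :
  prf sys (Fa (Atom (perp C)) :: G) (Neg (Ex (Atom C))).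
Proof.
  apply p_impI, (p_exE (A := Atom C)).
  - apply p_hyp, in_eq.
  - apply (prf_atom_perp_absurd _ _ C); [apply p_hyp, in_eq |].
    apply prf_faE_var0, p_hyp; simpl; auto.
Qed.

Lemma em1_proves_mrk G P :
  prf HA_EM1 G (Imp (Neg (Fa (Atom P))) (Ex (Atom (perp P)))).
Proof.
  apply p_impI, (p_em1 (P := P)); [reflexivity | |].
  - apply p_botE, (p_impE (A := Fa (Atom P))); apply p_hyp; simpl; auto.
  - apply p_hyp, in_eq.
Qed.

Lemma mrk_ex_atom_stable G C :
  prf HA_MRK G (Neg (Neg (Ex (Atom C)))) -> prf HA_MRK G (Ex (Atom C)).
Proof.
  intros HnnC.
  pose proof (p_mrk (G := G) (perp C) eq_refl) as Hmrk; rewrite perpK in Hmrk.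
  apply (p_impE Hmrk), p_impI, (p_impE (A := Neg (Ex (Atom C)))).
  - now apply prf_weaken_tl.
  - apply prf_fa_perp_not_ex.
Qed.

Lemma mrk_derives_em1 G P C :
  prf HA_MRK (Fa (Atom P) :: G) (Ex (Atom C)) ->
  prf HA_MRK (Ex (Atom (perp P)) :: G) (Ex (Atom C)) ->
  prf HA_MRK G (Ex (Atom C)).
Proof.
  intros HfaP HexPp; apply mrk_ex_atom_stable, p_impI.
  set (Gn := Neg (Ex (Atom C)) :: G).
  assert (HnC : prf HA_MRK Gn (Neg (Ex (Atom C)))) by apply p_hyp, in_eq.
  assert (HnfaP : prf HA_MRK Gn (Neg (Fa (Atom P)))).
  { apply p_impI, (p_impE (A := Ex (Atom C))).
    - now apply prf_weaken_tl.
    - now apply prf_weaken_cons. }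
  apply (p_impE HnC), (prf_cut _ _ (Ex (Atom (perp P)))).
  - exact (p_impE (p_mrk P eq_refl) HnfaP).
  - now apply prf_weaken_cons.
Qed.

Theorem mainTheorem6 :
  (forall P : atom,
      prf HA_EM1 [] (Imp (Neg (Fa (Atom P))) (Ex (Atom (perp P))))) /\
  (forall (G : list formula) (P C : atom),
      prf HA_MRK (Fa (Atom P) :: G) (Ex (Atom C)) ->
      prf HA_MRK (Ex (Atom (perp P)) :: G) (Ex (Atom C)) ->
      prf HA_MRK G (Ex (Atom C))).
Proof.
  split.
  - intros P; apply em1_proves_mrk.
  - exact mrk_derives_em1.
Qed.
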